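(* Let $F$ be a field of characteristic zero and let $Q$ be a finite quiver with vertex set $Q_0=\{1,\dots,n\}$ such that the path algebra $FQ$ is a PI algebra. Let \[A_Q=\{A\in M_n(F)\mid A_{i,j}=0 \text{ whenever there is no path in } Q \text{ from } i \text{ to } j\}.\] Then $\mathrm{Id}(FQ)=\mathrm{Id}(A_Q)$.
   Context: Paths in $Q$ include the length-zero paths $e_i$ at each vertex $i$ (so there is always a path from $i$ to $i$). The path algebra $FQ$ is the $F$-vector space with basis all paths of $Q$, with product of paths $p,q$ equal to the concatenation $pq$ if the terminal vertex of $p$ equals the starting vertex of $q$, and $0$ otherwise. $M_n(F)$ is the algebra of $n\times n$ matrices over $F$. For an $F$-algebra $A$, $\mathrm{Id}(A)$ denotes the T-ideal of the free associative algebra $F\langle X\rangle$ consisting of all polynomial identities satisfied by $A$; $A$ is PI if $\mathrm{Id}(A)\neq\{0\}$. *)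

From HB Require Import structures.
From mathcomp Require Import all_boot all_order all_algebra.
From mathcomp Require Import finmap.
Set Implicit Arguments. Unset Strict Implicit. Unset Printing Implicit Defensive.
Import Order.TTheory GRing.Theory Num.Theory.
Local Open Scope ring_scope.

(* A noncommutative polynomial is a finitely supported function from words
   (monomials x_{w_1} ... x_{w_k}, encoded as w : seq nat) to coefficients. *)
Definition ncpoly (F : fieldType) := {fsfun seq nat -> F with 0}.

Definition peval (F : fieldType) (T : Type) (add : T -> T -> T) (zero : T)
  (mul : T -> T -> T) (one : T) (scale : F -> T -> T)
  (f : ncpoly F) (x : nat -> T) : T :=
  \big[add/zero]_(w <- finsupp f) scale (f w) (foldr mul one (map x w)).

(* A path is a pair (i, s): a start vertex i and a (possibly empty) list of
   composable arrows starting at i. (i, [::]) is the trivial path e_i. *)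
Definition valid_path n (A : finType) (src tgt : A -> 'I_n) (i : 'I_n) (s : seq A) : bool :=
  if s is a :: s' then (src a == i) && path (fun a b => tgt a == src b) a s'
  else true.

Definition path_end n (A : finType) (tgt : A -> 'I_n) (i : 'I_n) (s : seq A) : 'I_n :=
  last i (map tgt s).

(* there is a path in Q from i to j (length-zero paths included) *)
Definition qpath_exists n (A : finType) (src tgt : A -> 'I_n) (i j : 'I_n) : Prop :=
  exists s : seq A, valid_path src tgt i s /\ path_end tgt i s = j.

(* Elements of FQ are represented as coefficient functions on pairs (i, s),
   vanishing off valid paths and with finite support. *)
Definition FQcarrier (F : fieldType) n (A : finType) := 'I_n * seq A -> F.

Definition inFQ (F : fieldType) n (A : finType) (src tgt : A -> 'I_n)
  (a : FQcarrier F n A) : Prop :=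
  (forall p, ~~ valid_path src tgt p.1 p.2 -> a p = 0) /\
  (exists l : seq ('I_n * seq A), forall p, a p != 0 -> p \in l).

Definition FQadd (F : fieldType) n (A : finType) (a b : FQcarrier F n A) : FQcarrier F n A :=
  fun p => a p + b p.
Definition FQzero (F : fieldType) n (A : finType) : FQcarrier F n A := fun _ => 0.
Definition FQscale (F : fieldType) n (A : finType) (c : F) (a : FQcarrier F n A) : FQcarrier F n A :=
  fun p => c * a p.
(* unit: sum of the trivial paths e_i *)
Definition FQone (F : fieldType) n (A : finType) : FQcarrier F n A :=
  fun p => if p.2 is [::] then 1 else 0.
(* product: bilinear extension of concatenation of paths (p q = concatenation
   if the end of p is the start of q, 0 otherwise): the coefficient of a path
   is the sum over all ways of splitting it as a prefix followed by a suffix. *)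
Definition FQmul (F : fieldType) n (A : finType) (tgt : A -> 'I_n)
  (a b : FQcarrier F n A) : FQcarrier F n A :=
  fun p => \sum_(k < (size p.2).+1)
      a (p.1, take k p.2) * b (path_end tgt p.1 (take k p.2), drop k p.2).

Definition FQeval (F : fieldType) n (A : finType) (tgt : A -> 'I_n)
  (f : ncpoly F) (x : nat -> FQcarrier F n A) : FQcarrier F n A :=
  peval (@FQadd F n A) (@FQzero F n A) (@FQmul F n A tgt) (@FQone F n A)
        (@FQscale F n A) f x.

Definition is_id_FQ (F : fieldType) n (A : finType) (src tgt : A -> 'I_n)
  (f : ncpoly F) : Prop :=
  forall x : nat -> FQcarrier F n A, (forall k, inFQ src tgt (x k)) ->
    forall p, FQeval tgt f x p = 0.

Definition inAQ (F : fieldType) n (A : finType) (src tgt : A -> 'I_n)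
  (M : 'M[F]_n) : Prop :=
  forall i j : 'I_n, ~ qpath_exists src tgt i j -> M i j = 0.

Definition Meval (F : fieldType) n (f : ncpoly F) (x : nat -> 'M[F]_n) : 'M[F]_n :=
  peval (@GRing.add _) 0 (@mulmx F n n n) 1%:M (fun c M => c *: M) f x.

Definition is_id_AQ (F : fieldType) n (A : finType) (src tgt : A -> 'I_n)
  (f : ncpoly F) : Prop :=
  forall x : nat -> 'M[F]_n, (forall k, inAQ src tgt (x k)) -> Meval f x = 0.

(* A weight [lam a] on each arrow gives a representation [mxrep lam]
   of the path algebra in M_n(F) sending a path p from i to j to the product of
   the weights of its arrows times the matrix unit e_ij; its image lies in A_Q,
   and for [lam = 1] every matrix of A_Q is the image of an element of FQ.  Hence
   identities of FQ hold in A_Q.  Conversely, let f be an identity of A_Q and y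
   a value of f on FQ.  For every [lam] the (i, j) entry of [mxrep lam y] is a
   polynomial in the weights that vanishes identically; as F is infinite, the
   coefficients of y on the paths from i to j using a given multiset of arrows
   sum to zero.  When FQ is PI, no two distinct paths with the same start use the
   same multiset of arrows: otherwise the quiver has two distinct cycles
   [a c1] and [b c2] at one vertex, and the cycles [a c1 (b c2)^k] generate a
   free subalgebra of FQ.  Hence y = 0. *)

From HB Require Import structures.
From mathcomp Require Import all_boot all_order all_algebra.
From mathcomp Require Import finmap.
From Stdlib Require Import ClassicalEpsilon FunctionalExtensionality.
Set Implicit Arguments.
Unset Strict Implicit.
Unset Printing Implicit Defensive.

Import GRing.Theory.
Local Open Scope ring_scope.

Lemma big_seq_single (T : eqType) (V : nmodType) (S : seq T) x (g : T -> V) :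
  uniq S -> x \in S -> (forall r, r \in S -> r != x -> g r = 0) ->
  \sum_(r <- S) g r = g x.
Proof.
move=> uS xS g0; rewrite (big_rem x) //= big1_seq ?addr0 // => r /andP[_].
by rewrite mem_rem_uniq // => /andP[rx rS]; apply: g0.
Qed.

Lemma big_uniq_supp (T : eqType) (V : nmodType) (S S' : seq T) (g : T -> V) :
  uniq S -> uniq S' -> (forall r, g r != 0 -> (r \in S) && (r \in S')) ->
  \sum_(r <- S) g r = \sum_(r <- S') g r.
Proof.
move=> uS uS' supp; apply: perm_big_supp; apply: uniq_perm; rewrite ?filter_uniq // => r.
by rewrite !mem_filter; have [/supp /andP[-> ->]|] := boolP (g r != 0).
Qed.

Lemma all_count_mem_perm_eq (A : finType) (s t : seq A) :
  all (fun a => count_mem a s == count_mem a t) (enum A) = perm_eq s t.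
Proof.
apply/allP/idP => [cnt|/permP pst a _]; last by rewrite pst.
by apply/allP => a _; apply: cnt; rewrite mem_enum.
Qed.

Lemma prod_count_mem (R : comPzSemiRingType) (A : finType) (t : A -> R) (s : seq A) :
  \prod_(a <- s) t a = \prod_(a <- enum A) t a ^+ count_mem a s.
Proof.
elim: s => [|b s IH]; first by rewrite big_nil big1 // => a _; rewrite expr0.
under [RHS]eq_bigr do rewrite /= exprD.
rewrite big_split /= -IH big_cons; congr (_ * _).
rewrite (bigD1_seq b) ?mem_enum ?enum_uniq //= eqxx expr1 big1 ?mulr1 // => a.
by rewrite eq_sym => /negbTE ->; rewrite expr0.
Qed.

Lemma eq_cat_take_drop (T : eqType) (t u w : seq T) :
  (t == u ++ w) = (take (size u) t == u) && (drop (size u) t == w).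
Proof.
apply/eqP/andP => [->|[/eqP e1 /eqP e2]]; first by rewrite take_size_cat // drop_size_cat.
by rewrite -(cat_take_drop (size u) t) e1 e2.
Qed.

Lemma cat_nseq_inj (T : eqType) (b : T) (c : seq T) (x y : seq T) k k' :
  ohead x != Some b -> ohead y != Some b ->
  flatten (nseq k (b :: c)) ++ x = flatten (nseq k' (b :: c)) ++ y -> k = k' /\ x = y.
Proof.
move=> xb yb; elim: k k' => [|k IH] [|k'] //=.
- by move=> e; move: xb; rewrite e eqxx.
- by move=> e; move: yb; rewrite -e eqxx.
- rewrite -!catA => -[/(congr1 (drop (size c)))]; rewrite !drop_size_cat //.
  by case/IH => -> ->.
Qed.

Section CharZero.
Variable F : fieldType.
Hypothesis F0 : [pchar F] =i pred0.

Lemma pchar0_natr_inj : injective (fun k : nat => k%:R : F).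
Proof.
move=> m k /= e; apply/eqP.
wlog le_mk : m k e / (m <= k)%N.
  by move=> W; case: (leqP m k) => [|/ltnW] ?; [|rewrite eq_sym]; apply: W.
have : (k - m)%:R == 0 :> F by rewrite natrB // e subrr.
by move/pcharf0P: F0 => ->; rewrite subn_eq0 eqn_leq le_mk.
Qed.

Lemma sum_monomials_eq0 (I : Type) (s : seq I) (c : I -> F) (d : I -> nat) :
  (forall t : F, \sum_(i <- s) c i * t ^+ d i = 0) ->
  forall d0, \sum_(i <- s | d i == d0) c i = 0.
Proof.
move=> vanish d0; pose p : {poly F} := \sum_(i <- s) c i *: 'X^(d i).
have p0 : p = 0.
  apply: (@roots_geq_poly_eq0 _ p [seq k%:R | k <- iota 0 (size p)]).
  - apply/allP => _ /mapP [k _ ->]; rewrite /root /p horner_sum.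
    by under eq_bigr do rewrite hornerZ hornerXn; rewrite vanish.
  - by rewrite map_inj_uniq ?iota_uniq //; apply: pchar0_natr_inj.
  - by rewrite size_map size_iota.
have := congr1 (fun q : {poly F} => q`_d0) p0.
rewrite /= coef0 /p coef_sum; apply: etrans.
rewrite big_mkcond; apply: eq_bigr => i _; rewrite coefZ coefXn eq_sym.
by case: (d0 == d i); rewrite ?mulr1 ?mulr0.
Qed.

Lemma sum_multimonomials_eq0 (I V : eqType) (s : seq I) (e : I -> V -> nat) (L : seq V) :
  uniq L -> forall c : I -> F,
  (forall t : V -> F, \sum_(i <- s) c i * \prod_(v <- L) t v ^+ e i v = 0) ->
  forall i0, \sum_(i <- s | all (fun v => e i v == e i0 v) L) c i = 0.
Proof.
elim: L => [_ c vanish i0 | u L IH /andP[uL uniqL] c vanish i0].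
  by apply: etrans (vanish (fun _ => 0)); apply: eq_bigr => i _; rewrite big_nil mulr1.
pose c' i := c i *+ (e i u == e i0 u).
have vanish' t : \sum_(i <- s) c' i * \prod_(v <- L) t v ^+ e i v = 0.
  have vanish_u (x : F) :
      \sum_(i <- s) (c i * \prod_(v <- L) t v ^+ e i v) * x ^+ e i u = 0.
    apply: etrans (vanish (fun v => if v == u then x else t v)).
    apply: eq_bigr => i _; rewrite big_cons eqxx mulrAC -mulrA; congr (_ * (_ * _)).
    apply: eq_big_seq => v vL; suff /negbTE -> : v != u by [].
    by apply: contraNneq uL => <-.
  apply: etrans (sum_monomials_eq0 vanish_u (e i0 u)); rewrite [RHS]big_mkcond.
  by apply: eq_bigr => i _; rewrite /c' mulrnAl mulrb.
apply: etrans (IH uniqL c' vanish' i0); rewrite big_mkcond [RHS]big_mkcond.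
by apply: eq_bigr => i _ /=; rewrite /c' mulrb; case: (e i u == e i0 u); case: all.
Qed.

End CharZero.

Section PevalMorphism.
Variables (F : fieldType) (T U : Type).
Variables (addT : T -> T -> T) (zeroT : T) (mulT : T -> T -> T) (oneT : T).
Variables (scaleT : F -> T -> T).
Variables (addU : U -> U -> U) (zeroU : U) (mulU : U -> U -> U) (oneU : U).
Variables (scaleU : F -> U -> U).
Variables (P : T -> Prop) (h : T -> U).
Hypotheses (P0 : P zeroT) (P1 : P oneT) (PD : forall a b, P a -> P b -> P (addT a b)).
Hypotheses (PM : forall a b, P a -> P b -> P (mulT a b)).
Hypotheses (PZ : forall c a, P a -> P (scaleT c a)).
Hypotheses (h0 : h zeroT = zeroU) (h1 : h oneT = oneU).
Hypotheses (hD : forall a b, P a -> P b -> h (addT a b) = addU (h a) (h b)).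
Hypotheses (hM : forall a b, P a -> P b -> h (mulT a b) = mulU (h a) (h b)).
Hypotheses (hZ : forall c a, P a -> h (scaleT c a) = scaleU c (h a)).

Lemma peval_morph f x : (forall k, P (x k)) ->
  P (peval addT zeroT mulT oneT scaleT f x) /\
  h (peval addT zeroT mulT oneT scaleT f x) =
    peval addU zeroU mulU oneU scaleU f (fun k => h (x k)).
Proof.
move=> Px; apply: (big_ind2 (fun a u => P a /\ h a = u)) => //.
  by move=> a u b v [Pa <-] [Pb <-]; split; [apply: PD | apply: hD].
move=> w _; suff [Pw <-] : P (foldr mulT oneT (map x w)) /\
    h (foldr mulT oneT (map x w)) = foldr mulU oneU (map (fun k => h (x k)) w).
  by split; [apply: PZ | apply: hZ].
elim: w => [|k w [Pw hw]] //=.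
by split; [apply: PM | rewrite hM // hw].
Qed.

End PevalMorphism.

Section QuiverPaths.
Variables (n : nat) (A : finType) (src tgt : A -> 'I_n).
Local Notation valid := (valid_path src tgt).
Local Notation pend := (path_end tgt).

Lemma path_end_cat i s t : pend i (s ++ t) = pend (pend i s) t.
Proof. by rewrite /path_end map_cat last_cat. Qed.

Lemma valid_path_cat i s t : valid i (s ++ t) = valid i s && valid (pend i s) t.
Proof.
case: s => [|a s] //=; rewrite cat_path -andbA /path_end /= last_map.
by case: t => [|b t] //=; rewrite [src b == _]eq_sym.
Qed.

Lemma valid_path_cons i a s : valid i (a :: s) = (src a == i) && valid (tgt a) s.
Proof. by rewrite -cat1s valid_path_cat /= andbT. Qed.

Definition cycle_at (v : 'I_n) (s : seq A) : Prop := valid v s /\ pend v s = v.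

Lemma cycle_at_cat v s t : cycle_at v s -> cycle_at v t -> cycle_at v (s ++ t).
Proof. by move=> [vs es] [vt et]; rewrite /cycle_at valid_path_cat path_end_cat es vs vt et. Qed.

Lemma cycle_at_nseq v s k : cycle_at v s -> cycle_at v (flatten (nseq k s)).
Proof. by move=> cs; elim: k => [|k IH] //=; apply: cycle_at_cat. Qed.

Lemma valid_path_cat_cycle i a s b t : valid i ((a :: s) ++ b :: t) -> src b = i ->
  cycle_at i (a :: s).
Proof.
rewrite valid_path_cat => /andP[vas]; rewrite valid_path_cons => /andP[/eqP eb _] bi.
by split=> //; rewrite -eb.
Qed.

(* Where two paths with the same arrows first differ, say by arrows [a] and
   [b], the arrow [a] of the first path is used later by the second and vice
   versa: both detours are cycles at the vertex where they branch. *)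
Lemma perm_paths_cycles i s t : valid i s -> valid i t -> perm_eq s t -> s != t ->
  exists v a b c1 c2, [/\ a != b, cycle_at v (a :: c1) & cycle_at v (b :: c2)].
Proof.
elim: s i t => [|a s IH] i [|b t] //; first by rewrite perm_sym => _ _ /perm_nilP.
  by move=> _ _ /perm_nilP.
move=> vs vt pe ne; have [eab|nab] := eqVneq a b.
  subst b; move: vs vt; rewrite !valid_path_cons => /andP[_ vs] /andP[_ vt].
  by apply: (IH (tgt a) t) => //; [rewrite -(perm_cons a) | apply: contra ne => /eqP ->].
have bs : b \in s.
  by have := perm_mem pe b; rewrite !inE eqxx [b == a]eq_sym (negbTE nab) /= => ->.
have at' : a \in t.
  by have := perm_mem pe a; rewrite !inE eqxx (negbTE nab) /= => <-.
have sa : src a = i by move: vs; rewrite valid_path_cons => /andP[/eqP].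
have sb : src b = i by move: vt; rewrite valid_path_cons => /andP[/eqP].
move: vs vt; case/splitPr: bs => s1 s2 vs; case/splitPr: at' => t1 t2 vt.
exists i, a, b, s1, t1; split => //; apply: valid_path_cat_cycle; eassumption.
Qed.

End QuiverPaths.

Section PathAlgebra.
Variables (F : fieldType) (n : nat) (A : finType) (src tgt : A -> 'I_n).
Local Notation FQ := (FQcarrier F n A).
Local Notation qpath := ('I_n * seq A)%type.

Definition pend (r : qpath) : 'I_n := path_end tgt r.1 r.2.
Definition pcat (p q : qpath) : qpath := (p.1, p.2 ++ q.2).
Definition basis (p : qpath) : FQ := fun r => (r == p)%:R.
Definition supported (S : seq qpath) (z : FQ) := forall r, z r != 0 -> r \in S.
Definition fin_supported (z : FQ) := exists S, supported S z.
Definition valid_supported (z : FQ) := forall r, ~~ valid_path src tgt r.1 r.2 -> z r = 0.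

Lemma FQ_decomp S z r : uniq S -> supported S z -> z r = \sum_(p <- S) z p * basis p r.
Proof.
move=> uS zS; have [rS|rS] := boolP (r \in S).
  rewrite (big_seq_single uS rS) /basis ?eqxx ?mulr1 // => p _ pr.
  by rewrite eq_sym (negbTE pr) mulr0.
have -> : z r = 0 by apply/eqP; apply: contraNT rS; apply: zS.
rewrite big1_seq // => p /andP[_ pS]; have /negbTE rp : r != p by apply: contraNneq rS => ->.
by rewrite /basis rp mulr0.
Qed.

Lemma FQsum_apply (I : Type) (s : seq I) (G : I -> FQ) r :
  (\big[@FQadd F n A/@FQzero F n A]_(i <- s) G i) r = \sum_(i <- s) G i r.
Proof. by elim: s => [|i s IH]; rewrite ?big_nil // !big_cons /FQadd IH. Qed.

Lemma FQmul_basisl p b r : FQmul tgt (basis p) b r =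
  if (r.1 == p.1) && (take (size p.2) r.2 == p.2)
  then b (pend p, drop (size p.2) r.2) else 0.
Proof.
case: r p => i t [j s]; rewrite /FQmul /basis /=.
have take_eq (k : 'I_(size t).+1) : ((i, take k t) == (j, s)) =
    ((i == j) && (take k t == s)) && (k == size s :> nat).
  rewrite xpair_eqE; case: eqP => //= _; case: eqP => //= <-.
  rewrite size_take; case: ltnP => [_|le_tk]; first by rewrite eqxx.
  by rewrite eq_sym eqn_leq le_tk -ltnS ltn_ord.
under eq_bigr do rewrite take_eq mulr_natl mulrb.
rewrite -big_mkcond (@big_ord1_cond_eq _ _ _ (fun k => b (path_end tgt i (take k t), drop k t))
  (fun k => (i == j) && (take k t == s))).
case: (i =P j) => [<-|]; last by rewrite andbF.
case: (take (size s) t =P s) => [ts|]; last by rewrite !andbF.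
have st : (size s < (size t).+1)%N by rewrite -ts size_take_min ltnS geq_minr.
by rewrite st /pend /= ts.
Qed.

Lemma pcat_split p q r :
  ((r.1 == p.1) && (take (size p.2) r.2 == p.2)) && ((pend p, drop (size p.2) r.2) == q) =
  (q.1 == pend p) && (r == pcat p q).
Proof.
case: r p q => i t [j s] [k u]; rewrite /pcat /= !xpair_eqE eq_cat_take_drop [k == _]eq_sym.
by case: (pend _ == k); case: (i == j); case: (take _ _ == _).
Qed.

Lemma FQmul_expand Sa Sb a b r : uniq Sa -> uniq Sb -> supported Sa a -> supported Sb b ->
  FQmul tgt a b r =
  \sum_(p <- Sa) \sum_(q <- Sb) a p * b q * ((q.1 == pend p) && (r == pcat p q))%:R.
Proof.
move=> uSa uSb aSa bSb.
have -> : FQmul tgt a b r = \sum_(p <- Sa) a p * FQmul tgt (basis p) b r.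
  rewrite /FQmul; under eq_bigr do rewrite (FQ_decomp _ uSa aSa) mulr_suml.
  rewrite exchange_big /=; apply: eq_bigr => p _; rewrite mulr_sumr.
  by apply: eq_bigr => k _; rewrite mulrA.
apply: eq_bigr => p _; under eq_bigr do rewrite -pcat_split.
rewrite FQmul_basisl; case: ifP => _ /=; last first.
  by rewrite mulr0 big1 // => q _; rewrite mulr0.
rewrite (FQ_decomp _ uSb bSb) mulr_sumr; apply: eq_bigr => q _.
by rewrite mulrA.
Qed.

Lemma supported_sub S S' z : supported S z -> {subset S <= S'} -> supported S' z.
Proof. by move=> zS sub r /zS /sub. Qed.

Lemma supported_add Sa Sb a b :
  supported Sa a -> supported Sb b -> supported (Sa ++ Sb) (FQadd a b).
Proof.
move=> aSa bSb r; rewrite mem_cat /FQadd.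
have [a0|/aSa -> //] := eqVneq (a r) 0.
by rewrite a0 add0r => /bSb ->; rewrite orbT.
Qed.

Lemma supported_one : supported [seq (i, [::]) | i <- enum 'I_n] (@FQone F n A).
Proof. by move=> [j [|a t]]; rewrite /FQone ?eqxx // => _; apply: map_f; rewrite mem_enum. Qed.

Lemma supported_mul Sa Sb a b : uniq Sa -> uniq Sb -> supported Sa a -> supported Sb b ->
  supported [seq pcat p q | p <- Sa, q <- Sb] (FQmul tgt a b).
Proof.
move=> uSa uSb aSa bSb r; apply: contraNT => rT.
rewrite (FQmul_expand _ uSa uSb aSa bSb) big1_seq // => p /andP[_ pS].
rewrite big1_seq // => q /andP[_ qS].
have /negbTE -> : r != pcat p q by apply: contraNneq rT => ->; apply: allpairs_f.
by rewrite andbF mulr0.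
Qed.

Lemma valid_supported_mul a b :
  valid_supported a -> valid_supported b -> valid_supported (FQmul tgt a b).
Proof.
move=> va vb [j t] /= vt; apply: big1 => k _ /=.
move: vt; rewrite -{1}(cat_take_drop k t) valid_path_cat negb_and => /orP[vk|vk].
  by rewrite va ?mul0r.
by rewrite vb ?mulr0.
Qed.

(* Junk unless [z] is finitely supported. *)
Definition support_seq (z : FQ) : seq qpath :=
  undup (epsilon (inhabits [::]) (fun S => supported S z)).

Lemma support_seq_uniq z : uniq (support_seq z).
Proof. exact: undup_uniq. Qed.

Lemma support_seqP z : fin_supported z -> supported (support_seq z) z.
Proof.
move=> zfin r /(epsilon_spec (inhabits [::]) (fun S => supported S z) zfin).
by rewrite mem_undup.
Qed.

Lemma inFQ_zero : inFQ src tgt (@FQzero F n A).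
Proof. by split=> //; exists [::] => r; rewrite eqxx. Qed.

Lemma inFQ_one : inFQ src tgt (@FQone F n A).
Proof. by split; [case=> ? [] | exists [seq (i, [::]) | i <- enum 'I_n]; apply: supported_one]. Qed.

Lemma inFQ_add (a b : FQ) : inFQ src tgt a -> inFQ src tgt b -> inFQ src tgt (FQadd a b).
Proof.
move=> [va [Sa aSa]] [vb [Sb bSb]]; split; last by exists (Sa ++ Sb); apply: supported_add.
by move=> r vr; rewrite /FQadd va ?vb ?addr0.
Qed.

Lemma inFQ_scale c (a : FQ) : inFQ src tgt a -> inFQ src tgt (FQscale c a).
Proof.
move=> [va [Sa aSa]]; split=> [r vr|]; first by rewrite /FQscale va ?mulr0.
by exists Sa => r; rewrite /FQscale mulf_eq0 negb_or => /andP[_ /aSa].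
Qed.

Lemma inFQ_mul (a b : FQ) : inFQ src tgt a -> inFQ src tgt b -> inFQ src tgt (FQmul tgt a b).
Proof.
move=> [va /support_seqP aS] [vb /support_seqP bS].
split; first exact: valid_supported_mul.
by eexists; apply: supported_mul aS bS; apply: support_seq_uniq.
Qed.

Definition path_weight (lam : A -> F) (r : qpath) : F := \prod_(a <- r.2) lam a.
Definition path_mx lam (r : qpath) : 'M[F]_n := path_weight lam r *: delta_mx r.1 (pend r).
Definition mxrep lam (z : FQ) : 'M[F]_n := \sum_(r <- support_seq z) z r *: path_mx lam r.

Lemma mxrep_sum lam S z : uniq S -> supported S z ->
  mxrep lam z = \sum_(r <- S) z r *: path_mx lam r.
Proof.
move=> uS zS; have zS' := support_seqP (ex_intro _ S zS).
apply: big_uniq_supp; rewrite ?undup_uniq // => r.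
by rewrite scaler_eq0 negb_or => /andP[zr _]; rewrite (zS _ zr) (zS' _ zr).
Qed.

Lemma mxrepE lam S z i j : uniq S -> supported S z ->
  mxrep lam z i j = \sum_(r <- S | (r.1 == i) && (pend r == j)) z r * path_weight lam r.
Proof.
move=> uS zS; rewrite (mxrep_sum lam uS zS) summxE [RHS]big_mkcond; apply: eq_bigr => r _.
rewrite !mxE [i == _]eq_sym [j == _]eq_sym.
by case: (_ && _); rewrite ?mulr1 ?mulr0.
Qed.

Lemma path_mx_mul lam p q :
  path_mx lam p *m path_mx lam q = (q.1 == pend p)%:R *: path_mx lam (pcat p q).
Proof.
rewrite /path_mx -scalemxAl -scalemxAr mul_delta_mx_cond !scalerA.
case: (pend p =P q.1) => [e|/eqP ne]; last first.
  by rewrite mulr0n scaler0 eq_sym (negbTE ne) mul0r scale0r.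
rewrite e eqxx mul1r mulr1n /pend /pcat /= path_end_cat -/(pend p) e.
by rewrite /path_weight big_cat.
Qed.

Lemma mxrep_zero lam : mxrep lam (@FQzero F n A) = 0.
Proof. by rewrite /mxrep big1 // => r _; rewrite scale0r. Qed.

Lemma mxrep_one lam : mxrep lam (@FQone F n A) = 1%:M.
Proof.
have uS1 : uniq [seq (i, [::] : seq A) | i <- enum 'I_n].
  by rewrite map_inj_uniq ?enum_uniq // => i j [].
rewrite (mxrep_sum lam uS1 supported_one) big_map big_enum mx1_sum_delta /=.
by apply: eq_bigr => i _; rewrite /FQone /path_mx /path_weight big_nil !scale1r.
Qed.

Lemma mxrep_add lam a b : fin_supported a -> fin_supported b ->
  mxrep lam (FQadd a b) = mxrep lam a + mxrep lam b.
Proof.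
move=> /support_seqP aS /support_seqP bS.
set S := undup (support_seq a ++ support_seq b); have uS : uniq S := undup_uniq _.
have aS' : supported S a by apply: supported_sub aS _ => r ra; rewrite mem_undup mem_cat ra.
have bS' : supported S b.
  by apply: supported_sub bS _ => r rb; rewrite mem_undup mem_cat rb orbT.
have abS : supported S (FQadd a b).
  by apply: supported_sub (supported_add aS bS) _ => r; rewrite mem_undup.
rewrite (mxrep_sum lam uS abS) (mxrep_sum lam uS aS') (mxrep_sum lam uS bS') -big_split /=.
by apply: eq_bigr => r _; rewrite scalerDl.
Qed.

Lemma mxrep_scale lam c a : fin_supported a -> mxrep lam (FQscale c a) = c *: mxrep lam a.
Proof.
move=> /support_seqP aS; have caS : supported (support_seq a) (FQscale c a).
  by move=> r; rewrite /FQscale mulf_eq0 negb_or => /andP[_ /aS].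
rewrite (mxrep_sum lam (support_seq_uniq a) caS) /mxrep scaler_sumr.
by apply: eq_bigr => r _; rewrite scalerA.
Qed.

Lemma mxrep_mul lam a b : fin_supported a -> fin_supported b ->
  mxrep lam (FQmul tgt a b) = mxrep lam a *m mxrep lam b.
Proof.
move=> /support_seqP aS /support_seqP bS.
have uSa := support_seq_uniq a; have uSb := support_seq_uniq b.
set T := undup [seq pcat p q | p <- support_seq a, q <- support_seq b].
have abT : supported T (FQmul tgt a b).
  by apply: supported_sub (supported_mul uSa uSb aS bS) _ => r; rewrite mem_undup.
rewrite (mxrep_sum lam (undup_uniq _) abT) /mxrep mulmx_suml.
under eq_bigr do rewrite (FQmul_expand _ uSa uSb aS bS) scaler_suml.
rewrite exchange_big; apply: eq_big_seq => p pSa /=.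
under eq_bigr do rewrite scaler_suml.
rewrite exchange_big mulmx_sumr; apply: eq_big_seq => q qSb /=.
rewrite -scalemxAl -scalemxAr scalerA path_mx_mul scalerA.
have pqT : pcat p q \in T by rewrite mem_undup; apply: allpairs_f.
rewrite (big_seq_single (undup_uniq _) pqT) ?eqxx ?andbT ?mulr_natr // => r _ /negbTE ->.
by rewrite andbF mulr0 scale0r.
Qed.

Lemma mxrep_peval lam f x : (forall k, inFQ src tgt (x k)) ->
  inFQ src tgt (FQeval tgt f x) /\
  mxrep lam (FQeval tgt f x) = Meval f (fun k => mxrep lam (x k)).
Proof.
apply: peval_morph.
- exact: inFQ_zero.
- exact: inFQ_one.
- exact: inFQ_add.
- exact: inFQ_mul.
- exact: inFQ_scale.
- exact: mxrep_zero.
- exact: mxrep_one.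
- by move=> a b [_ afin] [_ bfin]; apply: mxrep_add.
- by move=> a b [_ afin] [_ bfin]; apply: mxrep_mul.
- by move=> c a [_ afin]; apply: mxrep_scale.
Qed.

Lemma mxrep_inAQ lam z : inFQ src tgt z -> inAQ src tgt (mxrep lam z).
Proof.
move=> [vz /support_seqP zS] i j nij.
rewrite (mxrepE lam i j (support_seq_uniq z) zS) big1 // => r /andP[/eqP ri /eqP rj].
have [->|zr] := eqVneq (z r) 0; first by rewrite mul0r.
case: nij; exists r.2; rewrite -ri -rj; split=> //.
by apply: contraTT zr => /vz ->; rewrite negbK.
Qed.

(* Junk when there is no path from [i] to [j]. *)
Definition some_path (i j : 'I_n) : seq A :=
  epsilon (inhabits [::]) (fun s => valid_path src tgt i s /\ path_end tgt i s = j).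

Lemma some_pathP i j : qpath_exists src tgt i j ->
  valid_path src tgt i (some_path i j) /\ path_end tgt i (some_path i j) = j.
Proof. exact: epsilon_spec. Qed.

Definition lift_mx (M : 'M[F]_n) : FQ :=
  fun r => if r.2 == some_path r.1 (pend r) then M r.1 (pend r) else 0.

Definition some_paths : seq qpath :=
  undup [seq (ij.1, some_path ij.1 ij.2) | ij <- enum {: 'I_n * 'I_n}].

Lemma some_paths_mem i j : (i, some_path i j) \in some_paths.
Proof. by rewrite mem_undup; apply/mapP; exists (i, j); rewrite ?mem_enum. Qed.

Lemma lift_mx_supported M : supported some_paths (lift_mx M).
Proof.
move=> [i s]; rewrite /lift_mx /=; case: ifP => [/eqP -> _|_]; last by rewrite eqxx.
exact: some_paths_mem.
Qed.

Lemma lift_mx_inFQ M : inAQ src tgt M -> inFQ src tgt (lift_mx M).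
Proof.
move=> inM; split; last by exists some_paths; apply: lift_mx_supported.
move=> [i s] /= vs; rewrite /lift_mx /=; case: ifP => // /eqP e.
by apply: inM => /some_pathP[vp _]; rewrite e vp in vs.
Qed.

Lemma mxrep_lift_mx M : inAQ src tgt M -> mxrep (fun _ => 1) (lift_mx M) = M.
Proof.
move=> inM; apply/matrixP => i j.
rewrite (mxrepE _ i j (undup_uniq _) (lift_mx_supported (M := M))).
under eq_bigr do rewrite /path_weight big1 // mulr1.
have [/some_pathP[_ eij]|nij] := classic (qpath_exists src tgt i j); last first.
  rewrite inM // big1 // => r /andP[/eqP ri /eqP rj].
  by rewrite /lift_mx rj ri inM // if_same.
rewrite big_mkcond (big_seq_single (undup_uniq _) (some_paths_mem i j)).
  by rewrite /lift_mx /pend /= eij !eqxx.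
move=> [i' s] _ ne; case: ifP => // /andP[/= /eqP ii' /eqP rj].
rewrite /lift_mx /= rj ii'; case: eqP => // e.
by move: ne; rewrite e ii' eqxx.
Qed.

Lemma is_id_FQ_AQ (f : ncpoly F) : is_id_FQ src tgt f -> is_id_AQ src tgt f.
Proof.
move=> fid M inM; pose x k := lift_mx (M k).
have inx k : inFQ src tgt (x k) by apply: lift_mx_inFQ.
have [_ ev] := mxrep_peval (fun _ => 1) f inx.
have -> : M = (fun k => mxrep (fun _ => 1) (x k)).
  by apply: functional_extensionality => k; rewrite mxrep_lift_mx.
by rewrite -ev (@mxrep_sum _ [::]) ?big_nil // => r; rewrite fid ?eqxx.
Qed.

Definition paths_determined_by_arrows : Prop :=
  forall i s t, valid_path src tgt i s -> valid_path src tgt i t -> perm_eq s t -> s = t.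

Lemma mxrep_vanish_perm_paths (y : FQ) S r : [pchar F] =i pred0 -> uniq S -> supported S y ->
  (forall lam, mxrep lam y = 0) ->
  \sum_(q <- S | [&& q.1 == r.1, pend q == pend r & perm_eq q.2 r.2]) y q = 0.
Proof.
move=> F0 uS yS y0.
have vanish lam : \sum_(q <- [seq q <- S | (q.1 == r.1) && (pend q == pend r)])
    y q * \prod_(a <- enum A) lam a ^+ count_mem a q.2 = 0.
  have := congr1 (fun M : 'M[F]_n => M r.1 (pend r)) (y0 lam).
  rewrite mxE (mxrepE lam r.1 (pend r) uS yS) => E; apply: etrans E; rewrite big_filter.
  by apply: eq_bigr => q _; rewrite /path_weight [in RHS]prod_count_mem.
have := sum_multimonomials_eq0 F0 (enum_uniq A) vanish r.
rewrite big_filter_cond; apply: etrans; apply: eq_bigl => q.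
by rewrite all_count_mem_perm_eq andbA.
Qed.

Lemma valid_supported_neq0 z r : valid_supported z -> z r != 0 -> valid_path src tgt r.1 r.2.
Proof. by move=> vz zr; apply: contraTT zr => /vz ->; rewrite negbK. Qed.

Lemma is_id_AQ_FQ (f : ncpoly F) : [pchar F] =i pred0 -> paths_determined_by_arrows ->
  is_id_AQ src tgt f -> is_id_FQ src tgt f.
Proof.
move=> F0 det fid x inx r.
have [[vy /support_seqP yS] _] := mxrep_peval (fun _ => 1) f inx.
have y0 lam : mxrep lam (FQeval tgt f x) = 0.
  by have [_ ->] := mxrep_peval lam f inx; apply: fid => k; apply: mxrep_inAQ.
set y := FQeval tgt f x in vy yS y0 *.
apply/eqP; apply: contraT => yr; have vr := valid_supported_neq0 vy yr.
have := mxrep_vanish_perm_paths r F0 (support_seq_uniq y) yS y0.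
rewrite big_mkcond (big_seq_single (support_seq_uniq y) (yS _ yr)) => [|q _ nqr].
  by rewrite /= !eqxx perm_refl => /eqP; rewrite (negbTE yr).
case: ifP => // /and3P[/eqP qr _ pqr]; apply/eqP; apply: contraT => yq.
move: (valid_supported_neq0 vy yq); rewrite qr => /det /(_ vr pqr) e2.
by case/negP: nqr; rewrite [q]surjective_pairing qr e2 -surjective_pairing.
Qed.

Section FreeCycles.
Variables (v : 'I_n) (a b : A) (c1 c2 : seq A).
Hypotheses (nab : a != b) (cyc_a : cycle_at src tgt v (a :: c1))
  (cyc_b : cycle_at src tgt v (b :: c2)).

Definition free_cycle k := (a :: c1) ++ flatten (nseq k (b :: c2)).
Definition word_cycle (w : seq nat) := flatten (map free_cycle w).

Lemma free_cycle_at k : cycle_at src tgt v (free_cycle k).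
Proof. exact: cycle_at_cat cyc_a (cycle_at_nseq k cyc_b). Qed.

Lemma word_cycle_head w : ohead (word_cycle w) != Some b.
Proof. by case: w => [|k w] //=; rewrite /free_cycle /=; apply: contra nab => /eqP [->]. Qed.

Lemma word_cycle_inj : injective word_cycle.
Proof.
elim=> [|k w IH] [|k' w'] //; rewrite /word_cycle /= /free_cycle //= -!catA => -[].
move=> /(congr1 (drop (size c1))); rewrite !drop_size_cat //.
by case/(cat_nseq_inj (word_cycle_head w) (word_cycle_head w')) => -> /IH ->.
Qed.

Definition free_gen k : FQ := basis (v, free_cycle k).

Lemma free_gen_inFQ k : inFQ src tgt (free_gen k).
Proof.
rewrite /free_gen /basis; split=> [r|]; first have [->|_] // := eqVneq r (v, free_cycle k).
  by move/negP; case; apply: (free_cycle_at k).1.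
exists [:: (v, free_cycle k)] => r.
by have [->|_] := eqVneq r (v, free_cycle k); rewrite ?mem_head ?eqxx.
Qed.

Lemma free_gen_prod w t :
  foldr (FQmul tgt) (@FQone F n A) (map free_gen w) (v, t) = (t == word_cycle w)%:R.
Proof.
elim: w t => [|k w IH] t; first by case: t.
have -> : word_cycle (k :: w) = free_cycle k ++ word_cycle w by [].
rewrite eq_cat_take_drop /= FQmul_basisl /= eqxx /pend /= (free_cycle_at k).2 IH.
by case: (take _ _ == _).
Qed.

Lemma free_gens_not_PI (f : ncpoly F) w0 : f w0 != 0 -> ~ is_id_FQ src tgt f.
Proof.
move=> fw0 fid; have w0f : w0 \in finsupp f by rewrite mem_finsupp.
have := fid free_gen free_gen_inFQ (v, word_cycle w0).
rewrite /FQeval /peval FQsum_apply (big_seq_single (fset_uniq _) w0f) => [|w _ ne].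
  by rewrite /FQscale free_gen_prod eqxx mulr1; apply/eqP.
rewrite /FQscale free_gen_prod; case: eqP => [/word_cycle_inj e|]; last by rewrite mulr0.
by move: ne; rewrite e eqxx.
Qed.

End FreeCycles.

Lemma PI_paths_determined_by_arrows :
  (exists f : ncpoly F, (exists w, f w != 0) /\ is_id_FQ src tgt f) ->
  paths_determined_by_arrows.
Proof.
move=> [f [[w0 fw0] fid]] i s t vs vt pst; apply/eqP; apply: contraT => nst.
have [v [a [b [c1 [c2 [nab ca cb]]]]]] := perm_paths_cycles vs vt pst nst.
by case: (free_gens_not_PI nab ca cb fw0 fid).
Qed.

End PathAlgebra.

Theorem corollary2 (F : fieldType) (n : nat) (A : finType) (src tgt : A -> 'I_n) :
  [pchar F] =i pred0 ->
  (exists f : ncpoly F, (exists w, f w != 0) /\ is_id_FQ src tgt f) ->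
  forall f : ncpoly F, is_id_FQ src tgt f <-> is_id_AQ src tgt f.
Proof.
move=> F0 PI f; split; first exact: is_id_FQ_AQ.
exact: is_id_AQ_FQ F0 (PI_paths_determined_by_arrows PI).
Qed.
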